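(* For each integer $N\ge 1$, let $A_N^{\mathrm{quant}}$ be the $N\times N$ real matrix with entries \[ (A_N^{\mathrm{quant}})_{m,n} = \frac{\sin \frac{\pi}{N}}{\sin \frac{\pi}{N}(m-n)} \quad (m\neq n), \qquad (A_N^{\mathrm{quant}})_{m,m}=0, \] $m,n=1,\dots,N$. Then the set of eigenvalues of $A_N^{\mathrm{quant}}$ is \[ \left\{ \pm 2i \left(\sin \tfrac{\pi}{N}\right)\left(k-\tfrac12\right) \;\middle|\; k=1,\dots,\tfrac{N}{2}\right\} \quad\text{if $N$ is even}, \] and \[ \{0\}\cup\left\{ \pm 2i \left(\sin \tfrac{\pi}{N}\right) k \;\middle|\; k=1,\dots,\tfrac{N-1}{2}\right\} \quad\text{if $N$ is odd}. \] *)

From HB Require Import structures.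
From mathcomp Require Import all_boot all_order all_algebra.
From mathcomp Require Import reals trigo.
From mathcomp Require Export complex.
Set Implicit Arguments. Unset Strict Implicit. Unset Printing Implicit Defensive.
Import Order.TTheory GRing.Theory Num.Theory.
Local Open Scope ring_scope.
Local Open Scope complex_scope.

(* A_N^quant, indexed by 'I_N (0-based; only the differences m - n matter,
   so this coincides with the paper's 1-based indexing). *)
Definition Aquant (R : realType) (N : nat) : 'M[R]_N :=
  \matrix_(m < N, n < N)
    (if m == n then 0
     else sin (pi / N%:R) / sin (pi / N%:R * ((m : nat)%:R - (n : nat)%:R))).

Definition AquantC (R : realType) (N : nat) : 'M[R[i]]_N :=
  map_mx (fun x : R => x%:C) (Aquant R N).

From mathcomp Require Import all_boot all_order all_algebra.
From mathcomp Require Import reals trigo.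
From mathcomp Require Import complex.
From mathcomp Require Import ring zify.
Import Order.TTheory GRing.Theory Num.Theory.
Local Open Scope ring_scope.
Local Open Scope complex_scope.

(* Put theta = pi / N, a = e^(i theta) and q = a^2, a primitive N-th root of
   unity.  Since q^m - q^n = 2i sin(theta (m - n)) a^m a^n, the off-diagonal
   entries are 2i sin(theta) a^m a^n / (q^m - q^n), and for j < N the vector
   (a^((2j+1) m))_m is an eigenvector for 2i sin(theta) ((N-1)/2 - j).  This
   amounts to  sum_(m <> k) q^(m(j+1)) / (q^m - q^k) = ((N-1)/2 - j) q^(kj),
   which follows by dividing q^(m(j+1)) by q^m - q^k: the power sums of q
   vanish, and pairing m with 2k - m gives
   sum_(m <> k) 1 / (q^m - q^k) = -(N-1) / (2 q^k).  These N eigenvalues are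
   distinct, so they are the whole spectrum; centring the index j yields the
   two stated descriptions. *)

Lemma prim_root_of_exact_order (R : nzRingType) (n : nat) (z : R) :
  (0 < n)%N -> z ^+ n = 1 -> (forall r, (0 < r < n)%N -> z ^+ r != 1) ->
  n.-primitive_root z.
Proof.
move=> n_gt0 zn1 zr_neq1; have [m prim_m dvd_mn] := prim_order_exists n_gt0 zn1.
suff -> : n = m by [].
apply/eqP; rewrite eqn_leq (dvdn_leq n_gt0 dvd_mn) andbT leqNgt.
apply/negP => lt_mn.
have := zr_neq1 m; rewrite (prim_order_gt0 prim_m) lt_mn.
by rewrite (prim_expr_order prim_m) eqxx => /(_ isT).
Qed.

Section PrimitiveRootSums.
Variables (F : numFieldType) (n : nat) (q : F).
Hypothesis q_prim : n.+1.-primitive_root q.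
Local Notation N := n.+1.

Lemma prim_root_exprD (x y : 'I_N) : q ^+ (x + y)%R = q ^+ x * q ^+ y.
Proof. by rewrite /= prim_expr_mod // exprD. Qed.

Lemma prim_root_expr_neq0 (m : nat) : q ^+ m != 0.
Proof. by rewrite expf_neq0 // (prim_root_eq0 q_prim). Qed.

Lemma prim_root_expr_inj : injective (fun m : 'I_N => q ^+ m).
Proof.
move=> x y /eqP; rewrite (eq_prim_root_expr q_prim) !modn_small //.
by move=> /eqP /val_inj.
Qed.

Lemma sum_prim_root_expr (r : nat) : (r < N)%N ->
  \sum_(m < N) (q ^+ m) ^+ r = if r == 0%N then N%:R else 0.
Proof.
case: r => [|r] lt_rN /=.
  by rewrite (eq_bigr (fun=> 1)) ?sumr_const ?card_ord // => m _; rewrite expr0.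
have qr_neq1 : q ^+ r.+1 - 1 != 0.
  by rewrite subr_eq0 -(prim_order_dvd q_prim) gtnNdvd.
under eq_bigr do rewrite exprAC.
apply: (mulfI qr_neq1); rewrite mulr0 -subrX1 -exprM mulnC exprM.
by rewrite (prim_expr_order q_prim) expr1n subrr.
Qed.

Lemma sum_inv_sub_prim_root (k : 'I_N) :
  \sum_(m < N | m != k) (q ^+ m - q ^+ k)^-1 = - ((N%:R - 1) / 2) / q ^+ k.
Proof.
pose refl (m : 'I_N) := k + k - m.
have refl_inj : injective refl by move=> x y /addrI /oppr_inj.
have refl_neq m : (refl m != k) = (m != k).
  by rewrite /refl (can2_eq (subKr _) (subKr _)) addrK.
have exp_refl m : q ^+ refl m * q ^+ m = q ^+ k * q ^+ k.
  by rewrite -!prim_root_exprD subrK.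
have pair m : m != k ->
    (q ^+ m - q ^+ k)^-1 + (q ^+ refl m - q ^+ k)^-1 = - (q ^+ k)^-1.
  move=> mk; have qm := prim_root_expr_neq0 m; have qk := prim_root_expr_neq0 k.
  have qmk : q ^+ m - q ^+ k != 0.
    by rewrite subr_eq0; apply: contra mk => /eqP /prim_root_expr_inj ->.
  have -> : q ^+ refl m = q ^+ k * q ^+ k / q ^+ m by rewrite -(exp_refl m) mulfK.
  field; rewrite qm qk qmk mulNr -mulrBr mulf_neq0 //.
  by rewrite subr_eq0 eq_sym -subr_eq0.
have two_neq0 : (2 : F) != 0 by rewrite pnatr_eq0.
apply: (mulfI two_neq0); rewrite [LHS]mulr_natl mulr2n.
rewrite [X in _ + X = _](reindex_inj refl_inj).
rewrite [X in _ + X = _](eq_bigl (fun m => m != k)) => [|m]; last exact: refl_neq.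
rewrite -big_split /= (eq_bigr _ pair) sumr_const cardC1 card_ord /=.
rewrite -mulr_natl -natr1; have qk := prim_root_expr_neq0 k; by field.
Qed.

Lemma sum_expr_div_sub_prim_root (k : 'I_N) (j : nat) : (j < N)%N ->
  \sum_(m < N | m != k) q ^+ m ^+ j.+1 / (q ^+ m - q ^+ k) =
  (n%:R / 2 - j%:R) * q ^+ k ^+ j.
Proof.
move=> lt_jN.
have divide m : m != k -> q ^+ m ^+ j.+1 / (q ^+ m - q ^+ k) =
    \sum_(i < j.+1) q ^+ m ^+ (j - i) * q ^+ k ^+ i
    + q ^+ k ^+ j.+1 * (q ^+ m - q ^+ k)^-1.
  move=> mk; have qmk : q ^+ m - q ^+ k != 0.
    by rewrite subr_eq0; apply: contra mk => /eqP /prim_root_expr_inj ->.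
  apply: (mulfI qmk); rewrite mulrDr mulrCA mulfV // mulr1 mulrCA mulfV // mulr1.
  by rewrite -subrXX subrK.
have power_sum (i : 'I_j.+1) :
    \sum_(m < N | m != k) q ^+ m ^+ (j - i) * q ^+ k ^+ i =
    (if (j - i == 0)%N then N%:R else 0) * q ^+ k ^+ i - q ^+ k ^+ j.
  have := sum_prim_root_expr _ (leq_ltn_trans (leq_subr i j) lt_jN).
  rewrite (bigD1 k) //= -mulr_suml => <-.
  rewrite mulrDl -exprD subnK; last by rewrite -ltnS.
  by rewrite addrC addKr.
rewrite (eq_bigr _ divide) big_split /= -mulr_sumr sum_inv_sub_prim_root.
rewrite exchange_big /= (eq_bigr _ (fun i _ => power_sum i)) sumrB.
rewrite sumr_const card_ord big_ord_recr /= subnn eqxx big1 ?add0r; last first.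
  by move=> i _; rewrite subn_eq0 leqNgt ltn_ord mul0r.
rewrite exprS -natr1; have qk := prim_root_expr_neq0 k; by field.
Qed.

End PrimitiveRootSums.


Lemma eigenvalue_uniq_full (F : fieldType) (n : nat) (A : 'M[F]_n)
    (s : seq F) :
  uniq s -> size s = n -> all (eigenvalue A) s -> eigenvalue A =i s.
Proof.
move=> s_uniq s_size s_eig z; apply/idP/idP => [eig_z|]; last by move/(allP s_eig).
apply: contraT => z_notin_s.
have char_neq0 : char_poly A != 0 by rewrite monic_neq0 // char_poly_monic.
have roots_zs : all (root (char_poly A)) (z :: s).
  rewrite /= -eigenvalue_root_char; apply/andP; split; first exact: eig_z.
  by apply/allP => x /(allP s_eig); rewrite eigenvalue_root_char.
have := max_poly_roots char_neq0 roots_zs.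
by rewrite /= z_notin_s s_uniq size_char_poly s_size ltnn => /(_ isT).
Qed.

Section Expi.
Context {R : realType}.

Definition expi (x : R) : R[i] := cos x +i* sin x.

Lemma expiD x y : expi (x + y) = expi x * expi y.
Proof.
rewrite /expi cosD sinD; apply/eqP; rewrite eq_complex /=.
by apply/andP; split; apply/eqP; ring.
Qed.

Lemma complex_i_neq0 : 'i != 0 :> R[i].
Proof. by rewrite eq_complex /= oner_eq0 andbF. Qed.

Lemma expi_neq0 x : expi x != 0.
Proof.
have : expi (- x) * expi x = 1 by rewrite -expiD addNr /expi cos0 sin0.
by apply: contra_eq_neq => ->; rewrite mulr0 eq_sym oner_neq0.
Qed.

Lemma expiX k x : expi x ^+ k = expi (k%:R * x).
Proof.
elim: k => [|k IHk]; first by rewrite expr0 mul0r /expi cos0 sin0.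
by rewrite exprS IHk -expiD mulrSr mulrDl mul1r addrC.
Qed.

Lemma expiBexpiN x : expi x - expi (- x) = 'i * (2 * sin x)%:C.
Proof.
rewrite /expi cosN sinN; apply/eqP; rewrite eq_complex /=.
by apply/andP; split; apply/eqP; ring.
Qed.

End Expi.

Section QuantMatrix.
Variables (R : realType) (n : nat).
Local Notation N := n.+1.
Local Notation theta := (pi / N%:R : R).
Local Notation a := (expi theta).
Local Notation q := (a ^+ 2).

Lemma sin_theta_natmul_gt0 d : (0 < d < N)%N -> 0 < sin (theta * d%:R).
Proof.
case/andP => d_gt0 lt_dN; have theta_gt0 : 0 < theta by rewrite divr_gt0 ?pi_gt0.
apply: sin_gt0_pi; rewrite mulr_gt0 ?ltr0n //=.
rewrite [X in _ < X](_ : pi = theta * N%:R); last by rewrite divfK ?pnatr_eq0.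
by rewrite ltr_pM2l ?ltr_nat.
Qed.

Lemma sin_theta_sub_neq0 (m k : 'I_N) : m != k ->
  sin (theta * ((m : nat)%:R - (k : nat)%:R)) != 0.
Proof.
have sin_gt0 (x y : 'I_N) :
    (y < x)%N -> 0 < sin (theta * ((x : nat)%:R - (y : nat)%:R)).
  move=> lt_yx; rewrite -natrB; last exact: ltnW.
  rewrite sin_theta_natmul_gt0 // subn_gt0 lt_yx.
  exact: leq_ltn_trans (leq_subr _ _) (ltn_ord x).
rewrite neq_ltn => /orP [lt_mk | lt_km]; last by rewrite gt_eqF ?sin_gt0.
by rewrite -opprB mulrN sinN oppr_eq0 gt_eqF ?sin_gt0.
Qed.

Lemma expr_qB (m k : nat) :
  q ^+ m - q ^+ k = 'i * (2 * sin (theta * (m%:R - k%:R)))%:C * a ^+ m * a ^+ k.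
Proof.
rewrite -expiBexpiN -!exprM !expiX mulrBl mulrBl -!expiD.
by congr (expi _ - expi _); ring.
Qed.

Lemma prim_root_q : N.-primitive_root q.
Proof.
apply: prim_root_of_exact_order => // [|r r_bounds].
  rewrite -exprM expiX (_ : (2 * N)%:R * theta = pi *+ 2).
    by rewrite /expi cos2pi sin2pi.
  by rewrite natrM -mulr_natr; field; rewrite addrC natr1 pnatr_eq0.
rewrite -subr_eq0 -(expr0 q) expr_qB subr0 expr0 mulr1 !mulf_neq0 //.
- exact: complex_i_neq0.
- by rewrite fmorph_eq0 mulf_neq0 ?pnatr_eq0 // gt_eqF // sin_theta_natmul_gt0.
- by rewrite expf_neq0 // expi_neq0.
Qed.

Lemma AquantC_offdiag (m k : 'I_N) : m != k ->
  AquantC R N m k =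
  'i * (2 * sin theta)%:C * (a ^+ m * a ^+ k / (q ^+ m - q ^+ k)).
Proof.
move=> mk; rewrite !mxE (negbTE mk) expr_qB.
have sin_neq0 := sin_theta_sub_neq0 m k mk.
have am := expf_neq0 m (expi_neq0 theta).
have ak := expf_neq0 k (expi_neq0 theta).
rewrite fmorph_div !rmorphM /= rmorph_nat.
by field; rewrite am ak complex_i_neq0 fmorph_eq0 sin_neq0.
Qed.

Definition quant_eigenvalue (j : nat) : R[i] :=
  'i * (2 * sin theta * (n%:R / 2 - j%:R))%:C.

Lemma eigenvalue_quant_eigenvalue (j : nat) : (j < N)%N ->
  eigenvalue (AquantC R N) (quant_eigenvalue j).
Proof.
move=> lt_jN; apply/eigenvalueP; exists (\row_(m < N) a ^+ (j.*2.+1 * m)); last first.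
  by apply/eqP => /rowP /(_ ord0) /eqP; rewrite !mxE muln0 expr0 oner_eq0.
have a_pow_q (m : nat) : q ^+ m ^+ j.+1 = a ^+ (j.*2.+1 * m) * a ^+ m.
  by rewrite -exprD -!exprM; congr (a ^+ _); lia.
apply/rowP => k; rewrite mxE (bigD1 k) //= [AquantC R N k k]mxE [Aquant R N k k]mxE.
rewrite eqxx rmorph0 mulr0 add0r.
rewrite (eq_bigr (fun m : 'I_N => 'i * (2 * sin theta)%:C * a ^+ k *
    (q ^+ m ^+ j.+1 / (q ^+ m - q ^+ k)))) => [|m mk]; last first.
  by rewrite AquantC_offdiag // mxE a_pow_q; ring.
rewrite -mulr_sumr sum_expr_div_sub_prim_root ?prim_root_q // !mxE /quant_eigenvalue.
rewrite !rmorphM rmorphB /= fmorph_div !rmorph_nat.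
have -> : a ^+ (j.*2.+1 * k) = a ^+ k * q ^+ k ^+ j.
  by rewrite -!exprM -exprD; congr (a ^+ _); lia.
ring.
Qed.

Lemma quant_eigenvalue_inj : {in gtn N &, injective quant_eigenvalue}.
Proof.
move=> j1 j2; rewrite !inE; have [-> | n_gt0] := posnP n; first by lia.
move=> _ _ /(mulfI complex_i_neq0) /complexI.
have sin_gt0 : 0 < sin theta by have := sin_theta_natmul_gt0 1; rewrite mulr1; apply.
have c_neq0 : 2 * sin theta != 0 by rewrite mulf_neq0 ?pnatr_eq0 ?gt_eqF.
by move=> /(mulfI c_neq0) /addrI /oppr_inj /eqP; rewrite eqr_nat => /eqP.
Qed.

Lemma eigenvalue_AquantC (z : R[i]) :
  eigenvalue (AquantC R N) z <-> exists2 j, (j < N)%N & z = quant_eigenvalue j.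
Proof.
have spectrum : eigenvalue (AquantC R N) =i [seq quant_eigenvalue j | j <- iota 0 N].
  apply: eigenvalue_uniq_full.
  - rewrite map_inj_in_uniq ?iota_uniq // => x y; rewrite !mem_iota !add0n.
    by move=> /andP [_ lt_x] /andP [_ lt_y]; apply: quant_eigenvalue_inj.
  - by rewrite size_map size_iota.
  - apply/allP => x /mapP [j]; rewrite mem_iota add0n => /andP [_ lt_jN] ->.
    exact: eigenvalue_quant_eigenvalue.
split=> [eig_z | [j lt_jN ->]]; last exact: eigenvalue_quant_eigenvalue.
have /mapP [j] : z \in [seq quant_eigenvalue j | j <- iota 0 N].
  by rewrite -spectrum; exact: eig_z.
by rewrite mem_iota add0n => /andP [_ lt_jN] ->; exists j.
Qed.

End QuantMatrix.

Section CenteredRange.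
Context {F : numFieldType} {V : zmodType} {f : F -> V} (h : nat) (z : V).
Hypothesis f_opp : {morph f : x / - x}.

Lemma centered_range_odd :
  (exists2 j, (j < h.*2.+1)%N & z = f (h%:R - j%:R)) <->
  z = f 0 \/ exists k, [/\ (1 <= k)%N, (k <= h)%N & z = f k%:R \/ z = - f k%:R].
Proof.
split=> [[j lt_j ->] | [-> | [k [k_gt0 le_kh [-> | ->]]]]].
- have [le_jh | lt_hj] := leqP j h.
    have [-> | ne_jh] := eqVneq j h; first by left; rewrite subrr.
    by right; exists (h - j)%N; split; [lia | lia | left; rewrite natrB].
  right; exists (j - h)%N; split; [lia | lia | right].
  by rewrite -f_opp natrB ?opprB //; apply: ltnW.
- by exists h; [lia | rewrite subrr].
- by exists (h - k)%N; [lia | rewrite natrB //; congr f; ring].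
- by exists (h + k)%N; [lia | rewrite -f_opp natrD; congr f; ring].
Qed.

Lemma centered_range_even :
  (exists2 j, (j < h.*2)%N & z = f (h%:R - 2^-1 - j%:R)) <->
  exists k, [/\ (1 <= k)%N, (k <= h)%N &
    z = f (k%:R - 2^-1) \/ z = - f (k%:R - 2^-1)].
Proof.
split=> [[j lt_j ->] | [k [k_gt0 le_kh [-> | ->]]]].
- have [lt_jh | le_hj] := ltnP j h.
    exists (h - j)%N; split; [lia | lia | left].
    by rewrite natrB; [congr f; field | apply: ltnW].
  exists (j - h).+1; split; [lia | lia | right].
  by rewrite -f_opp -[(j - h).+1%:R]natr1 natrB //; congr f; field.
- by exists (h - k)%N; [lia | rewrite natrB //; congr f; field].
- exists (h + k.-1)%N; first lia.
  by rewrite -f_opp -{1}(prednK k_gt0) -[k.-1.+1%:R]natr1 natrD; congr f; field.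
Qed.

End CenteredRange.

Theorem theorem4 (R : realType) (N : nat) (hN : (1 <= N)%N) (z : R[i]) :
  eigenvalue (AquantC R N) z <->
  (if odd N then
     z = 0 \/
     exists k : nat, [/\ (1 <= k)%N, (k <= N.-1./2)%N &
       (z = 'i * (2 * sin (pi / N%:R) * k%:R)%:C \/
        z = - ('i * (2 * sin (pi / N%:R) * k%:R)%:C))]
   else
     exists k : nat, [/\ (1 <= k)%N, (k <= N./2)%N &
       (z = 'i * (2 * sin (pi / N%:R) * (k%:R - 2^-1))%:C \/
        z = - ('i * (2 * sin (pi / N%:R) * (k%:R - 2^-1))%:C))]).
Proof.
case: N hN => // n _; rewrite eigenvalue_AquantC /quant_eigenvalue.
set c := 2 * sin (pi / n.+1%:R).
have c_opp : {morph (fun t => 'i * (c * t)%:C) : x / - x}.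
  by move=> x; rewrite /= mulrN rmorphN mulrN.
have [h [-> | ->]] : exists h, n = h.*2 \/ n = h.*2.+1.
  exists n./2; rewrite -{1 3}(odd_double_half n).
  by case: (odd n); [right; rewrite add1n | left; rewrite add0n].
- rewrite /= odd_double half_double (_ : h.*2%:R / 2 = h%:R :> R).
    by rewrite (centered_range_odd _ _ c_opp) /= mulr0 rmorph0 mulr0.
  by rewrite -muln2 natrM mulfK // pnatr_eq0.
- rewrite /= odd_double /= -doubleS (_ : h.*2.+1%:R / 2 = h.+1%:R - 2^-1 :> R).
    by rewrite (centered_range_even _ _ c_opp) half_double.
  by rewrite -!natr1 -muln2 natrM; field.
Qed.
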